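(* Let $n\ge 1$, let $a=(a_m)_{m\ge 0}$ and $b=(b_m)_{m\ge0}$ be complex sequences with $b_0=0$ and $b_m\neq 0$ for all $m\ge1$, and let $(p_m)_{m\ge0}$ be the monic polynomials defined by $p_{-1}=0$, $p_0=1$, $p_{m+1}(x)=(x-a_m)p_m(x)-b_mp_{m-1}(x)$ for $m\ge0$; write $p_m(x)=\sum_{l=0}^{m}p^m_l x^l$ with $p^m_m=1$. Then the assignment $$W:\ \tilde t^{(r)}_{ij}\longmapsto t^{(r)}_{ij}+\sum_{l=0}^{r-1}p^r_l\,t^{(l)}_{ij}\qquad(1\le i,j\le n,\ r\ge1)$$ extends to an algebra isomorphism $W: OY(\mathfrak{gl}_n,a,b)\to Y(\mathfrak{gl}_n)$. On generating series it is given, for $i,j=1,\dots,n$, by $$W(\tilde T_{ij}(u))=\frac{1}{2\pi i}\oint_{|z|=1}K\!\left(z,\tfrac1u\right)t_{ij}(z)\,\frac{dz}{z}=\sum_{l\ge0}u^{-l}\sum_{m=0}^{l}p^l_m\,t^{(m)}_{ij}.$$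
   Context: The Yangian $Y(\mathfrak{gl}_n)$ is the unital associative $\mathbb C$-algebra with generators $t^{(r)}_{ij}$ ($1\le i,j\le n$, $r\in\{1,2,\dots\}$) and defining relations $[t^{(r+1)}_{ij},t^{(s)}_{kl}]-[t^{(r)}_{ij},t^{(s+1)}_{kl}]=t^{(r)}_{kj}t^{(s)}_{il}-t^{(s)}_{kj}t^{(r)}_{il}$ for all $r,s\ge0$ and all $i,j,k,l$, where $t^{(0)}_{ij}=\delta_{ij}$; put $t_{ij}(z)=\sum_{r\ge0}t^{(r)}_{ij}z^{-r}$. For complex sequences $a,b$, $OY(\mathfrak{gl}_n,a,b)$ is the unital associative $\mathbb C$-algebra with generators $\tilde t^{(r)}_{ij}$ ($1\le i,j\le n$, $r\ge1$) and defining relations $$[\tilde t^{(r+1)}_{ij}+a_r\tilde t^{(r)}_{ij}+b_r\tilde t^{(r-1)}_{ij},\tilde t^{(s)}_{kl}]-[\tilde t^{(r)}_{ij},\tilde t^{(s+1)}_{kl}+a_s\tilde t^{(s)}_{kl}+b_s\tilde t^{(s-1)}_{kl}]=\tilde t^{(r)}_{kj}\tilde t^{(s)}_{il}-\tilde t^{(s)}_{kj}\tilde t^{(r)}_{il}$$ for all $r,s\ge0$ and all $i,j,k,l$, with conventions $\tilde t^{(0)}_{ij}=\delta_{ij}$, $\tilde t^{(-1)}_{ij}=0$; put $\tilde T_{ij}(u)=\delta_{ij}+\sum_{r\ge1}\tilde t^{(r)}_{ij}u^{-r}$. The generating function of the polynomials is $K(z,u)=\sum_{l\ge0}p_l(z)u^l$.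 The contour integral is understood formally: $\frac{1}{2\pi i}\oint_{|z|=1}F(z)\frac{dz}{z}$ denotes the coefficient of $z^0$ of the formal expression $F(z)$, taken coefficientwise in $u^{-1}$. *)

From mathcomp Require Import all_boot all_algebra.
From mathcomp Require Import complex.
From mathcomp Require Import reals Rstruct.
Set Implicit Arguments. Unset Strict Implicit. Unset Printing Implicit Defensive.
Import GRing.Theory.
Local Open Scope ring_scope.

Notation CC := ((Rdefinitions.R)[i]) (only parsing).

Section Defs.
Variable n : nat.

(* A family of generators  gen r i j  standing for  t^{(r+1)}_{ij}  (r >= 0,
   i.e. superscripts r+1 >= 1); indices 1..n are encoded as 'I_n. *)
Definition gens (A : algType CC) := nat -> 'I_n -> 'I_n -> A.

Definition tcoef (A : algType CC) (g : gens A) (r : nat) (i j : 'I_n) : A :=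
  if r is r'.+1 then g r' i j else (i == j)%:R.

Definition tprev (A : algType CC) (g : gens A) (r : nat) (i j : 'I_n) : A :=
  if r is r'.+1 then tcoef g r' i j else 0.

Definition comm (A : algType CC) (x y : A) : A := x * y - y * x.

Definition yangian_rel (A : algType CC) (g : gens A) : Prop :=
  forall (r s : nat) (i j k l : 'I_n),
    comm (tcoef g r.+1 i j) (tcoef g s k l) - comm (tcoef g r i j) (tcoef g s.+1 k l)
    = tcoef g r k j * tcoef g s i l - tcoef g s k j * tcoef g r i l.

Definition oy_shift (a b : nat -> CC) (A : algType CC) (g : gens A)
    (r : nat) (i j : 'I_n) : A :=
  tcoef g r.+1 i j + a r *: tcoef g r i j + b r *: tprev g r i j.

Definition oy_rel (a b : nat -> CC) (A : algType CC) (g : gens A) : Prop :=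
  forall (r s : nat) (i j k l : 'I_n),
    comm (oy_shift a b g r i j) (tcoef g s k l) - comm (tcoef g r i j) (oy_shift a b g s k l)
    = tcoef g r k j * tcoef g s i l - tcoef g s k j * tcoef g r i l.

(* (A, g) is a presentation of the algebra with generators g subject to the
   relations rel: the relations hold in A, and for every C-algebra B with a
   family h satisfying rel there is a unique C-algebra morphism A -> B sending
   g to h (universal property of the algebra defined by generators and
   relations). *)
Definition presented_by (rel : forall B : algType CC, gens B -> Prop)
    (A : algType CC) (g : gens A) : Prop :=
  rel A g /\
  forall (B : algType CC) (h : gens B), rel B h ->
    (exists f : {lrmorphism A -> B}, forall r i j, f (g r i j) = h r i j) /\
    (forall f1 f2 : {lrmorphism A -> B},
        (forall r i j, f1 (g r i j) = h r i j) ->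
        (forall r i j, f2 (g r i j) = h r i j) ->
        forall x, f1 x = f2 x).

End Defs.

(* The monic polynomials p_m:  p_{-1} = 0, p_0 = 1,
   p_{m+1} = (x - a_m) p_m - b_m p_{m-1}.  ppair m = (p_{m-1}, p_m). *)
Fixpoint ppair (a b : nat -> CC) (m : nat) : {poly CC} * {poly CC} :=
  match m with
  | 0 => (0, 1)
  | m'.+1 => let: (q, p) := ppair a b m' in
             (p, ('X - (a m')%:P) * p - (b m')%:P * q)
  end.

Definition orthpoly (a b : nat -> CC) (m : nat) : {poly CC} := (ppair a b m).2.

(* Formal coefficient of z^0 in  P(z) * sum_{r>=0} c_r z^{-r},  where P is a
   polynomial in z:  this is  sum_k P_k c_k. *)
Definition const_term (A : algType CC) (P : {poly CC}) (c : nat -> A) : A :=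
  \sum_(k < size P) P`_k *: c k.

(* For a family F of linear maps from C[X] to an algebra, consider the
   relation [rel_defect F P Q = 0] in the polynomial arguments P, Q.  If
   F (X^m) = t^(m), its instance at (X^r, X^s) is the Yangian relation; if
   F (p_m) = t~^(m), its instance at (p_r, p_s) is the relation of
   OY(gl_n, a, b), because X p_r = p_(r+1) + a_r p_r + b_r p_(r-1).  The defect
   is bilinear and both (X^m) and (p_m) are monic bases of C[X], so either
   relation is equivalent to the vanishing of the defect on all of C[X].
   Hence t~^(r) |-> F_t (p_r) and t^(r) |-> F_t~ (X^r), with F_t, F_t~ the
   linear maps sending X^m to t^(m) and p_m to t~^(m), define mutually
   inverse morphisms. *)

From mathcomp Require Import all_boot all_algebra.
From mathcomp Require Import complex.
From mathcomp Require Import reals Rstruct.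
From mathcomp Require Import ring.
Set Implicit Arguments. Unset Strict Implicit. Unset Printing Implicit Defensive.
Import GRing.Theory.
Local Open Scope ring_scope.

Lemma linearB_fun (R : pzRingType) (U : lmodType R) (V : lmodType R) (f g : U -> V) :
  linear f -> linear g -> linear (fun x => f x - g x).
Proof. by move=> lf lg u x y; rewrite lf lg scalerBr addrACA opprD. Qed.

Section LinearMul.
Variables (R : comNzRingType) (U : lmodType R) (A : algType R) (f : U -> A) (y : A).
Hypothesis f_linear : linear f.

Lemma linear_mulr_fun : linear (fun x => f x * y).
Proof. by move=> u x x'; rewrite f_linear mulrDl scalerAl. Qed.

Lemma linear_mull_fun : linear (fun x => y * f x).
Proof. by move=> u x x'; rewrite f_linear mulrDr scalerAr. Qed.
End LinearMul.

Lemma size_scaleD_leq (R : nzRingType) (u : R) (P Q : {poly R}) :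
  (size (u *: P + Q)%R <= maxn (size P) (size Q))%N.
Proof.
rewrite (leq_trans (size_polyD _ _)) // geq_max leq_maxr.
by rewrite (leq_trans (size_scale_leq _ _)) ?leq_maxl.
Qed.

Section MonicBasis.
Variables (R : comNzRingType) (q : nat -> {poly R}).
Hypotheses (q_monic : forall k, q k \is monic) (size_q : forall k, size (q k) = k.+1).

Lemma coef_basis_top k : (q k)`_k = 1.
Proof. by have /monicP := q_monic k; rewrite /lead_coef size_q. Qed.

Lemma size_sub_basis_top N (P : {poly R}) :
  (size P <= N.+1)%N -> (size (P - P`_N *: q N)%R <= N)%N.
Proof.
move=> sP; apply/leq_sizeP => k; rewrite leq_eqVlt => /predU1P [<-|ltNk].
  by rewrite coefB coefZ coef_basis_top mulr1 subrr.
rewrite coefB coefZ (nth_default _ (leq_trans sP ltNk)).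
by rewrite [(q N)`_k]nth_default ?size_q // mulr0 subr0.
Qed.

Lemma linear_basis_eq (V : lmodType R) (f g : {poly R} -> V) :
  linear f -> linear g -> (forall k, f (q k) = g (q k)) -> f =1 g.
Proof.
move=> lf lg fgq P; elim: (size P) {-2}P (leqnn (size P)) => [|N IHN] {}P sP.
  move: sP; rewrite leqn0 size_poly_eq0 => /eqP ->.
  by rewrite -(subrr (q 0%N)) !(zmod_morphism_linear lf, zmod_morphism_linear lg) fgq.
rewrite -(subrK (P`_N *: q N) P) addrC lf lg fgq IHN //.
exact: size_sub_basis_top.
Qed.

Section Extension.
Variables (V : lmodType R) (c : nat -> V).

Fixpoint basis_ext_rec (N : nat) (P : {poly R}) : V :=
  if N is N'.+1 then P`_N' *: c N' + basis_ext_rec N' (P - P`_N' *: q N') else 0.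

Definition basis_ext (P : {poly R}) : V := basis_ext_rec (size P) P.

Lemma basis_ext_rec_linear N : linear (basis_ext_rec N).
Proof.
elim: N => [|N IHN] u P Q /=; first by rewrite scaler0 addr0.
have -> : u *: P + Q - (u *: P + Q)`_N *: q N
        = u *: (P - P`_N *: q N) + (Q - Q`_N *: q N).
  by rewrite coefD coefZ scalerDl -scalerA scalerBr opprD addrACA.
by rewrite IHN coefD coefZ scalerDl -scalerA scalerDr addrACA.
Qed.

Lemma basis_ext_rec_size N (P : {poly R}) :
  (size P <= N)%N -> basis_ext_rec N P = basis_ext P.
Proof.
elim: N => [|N IHN] sP; first by move: sP; rewrite leqn0 /basis_ext => /eqP ->.
move: sP; rewrite leq_eqVlt => /predU1P [<-//|sP] /=.
by rewrite nth_default // !scale0r subr0 add0r IHN.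
Qed.

Lemma basis_ext_linear : linear basis_ext.
Proof.
move=> u P Q; set N := maxn (size P) (size Q).
rewrite -!(basis_ext_rec_size (N := N)) ?leq_maxl ?leq_maxr ?size_scaleD_leq //.
exact: basis_ext_rec_linear.
Qed.

Lemma basis_ext_basis k : basis_ext (q k) = c k.
Proof.
rewrite /basis_ext size_q /= coef_basis_top !scale1r.
by rewrite (zmod_morphism_linear (basis_ext_rec_linear k)) subrr addr0.
Qed.

End Extension.
End MonicBasis.

Section ConstTerm.
Variables (A : algType CC) (c : nat -> A).

Lemma const_termE (P : {poly CC}) N :
  (size P <= N)%N -> const_term P c = \sum_(k < N) P`_k *: c k.
Proof.
move=> sP; rewrite /const_term (big_ord_widen N (fun k => P`_k *: c k) sP) big_mkcond.
by apply: eq_bigr => k _; case: ltnP => // sPk; rewrite nth_default ?scale0r.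
Qed.

Lemma const_term_linear : linear (fun P => const_term P c).
Proof.
move=> u P Q /=; set N := maxn (size P) (size Q).
rewrite !(const_termE (N := N)) ?leq_maxl ?leq_maxr ?size_scaleD_leq //.
rewrite scaler_sumr -big_split; apply: eq_bigr => k _.
by rewrite coefD coefZ scalerDl scalerA.
Qed.

Lemma const_termXn m : const_term 'X^m c = c m.
Proof.
rewrite /const_term size_polyXn big_ord_recr /= coefXn eqxx scale1r big1 ?add0r //.
by move=> k _; rewrite coefXn ltn_eqF // scale0r.
Qed.
End ConstTerm.

Section OrthogonalPolynomials.
Variables (a b : nat -> CC).
Local Notation p := (orthpoly a b).

Lemma orthpoly0 : p 0 = 1.
Proof. by []. Qed.

Lemma ppairS_fst m : (ppair a b m.+1).1 = p m.
Proof. by rewrite /orthpoly /=; case: ppair. Qed.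

Lemma orthpolyS m : p m.+1 = ('X - (a m)%:P) * p m - b m *: (ppair a b m).1.
Proof. by rewrite -mul_polyC /orthpoly /=; case: ppair. Qed.

Lemma mulX_orthpoly m : 'X * p m = p m.+1 + a m *: p m + b m *: (ppair a b m).1.
Proof. by rewrite orthpolyS -!mul_polyC; ring. Qed.

Lemma orthpoly_monic_size m :
  (p m \is monic /\ size (p m) = m.+1) /\ (size (ppair a b m).1 <= m)%N.
Proof.
elim: m => [|m [[p_monic size_p] size_prev]].
  by rewrite /orthpoly /= monic1 size_poly1 size_poly0.
rewrite ppairS_fst size_p leqnn orthpolyS.
have lead_monic : ('X - (a m)%:P) * p m \is monic by rewrite monicMl ?monicXsubC.
have size_lead : size (('X - (a m)%:P) * p m) = m.+2.
  by rewrite size_monicM ?monicXsubC ?monic_neq0 // size_XsubC size_p.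
have size_tail : (size (- (b m *: (ppair a b m).1)) < m.+2)%N.
  by rewrite size_polyN (leq_ltn_trans (size_scale_leq _ _)) // ltnS ltnW.
by rewrite monicE lead_coefDl ?size_polyDl ?size_lead // -monicE.
Qed.

Lemma orthpoly_monic m : p m \is monic.
Proof. by case: (orthpoly_monic_size m) => [[]]. Qed.

Lemma size_orthpoly m : size (p m) = m.+1.
Proof. by case: (orthpoly_monic_size m) => [[]]. Qed.
End OrthogonalPolynomials.

Section Transfer.
Variables (n : nat) (A : algType CC) (F : 'I_n -> 'I_n -> {poly CC} -> A).
Hypothesis F_linear : forall i j, linear (F i j).

Definition rel_defect (P Q : {poly CC}) (i j k l : 'I_n) : A :=
  comm (F i j ('X * P)) (F k l Q) - comm (F i j P) (F k l ('X * Q))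
  - (F k j P * F i l Q - F k j Q * F i l P).

Definition polynomial_rel : Prop :=
  forall (P Q : {poly CC}) (i j k l : 'I_n), rel_defect P Q i j k l = 0.

Lemma linear_mulX i j : linear (fun P => F i j ('X * P)).
Proof. by move=> u P Q; rewrite mulrDr -scalerAr F_linear. Qed.

Lemma rel_defect_linearl Q i j k l : linear (fun P => rel_defect P Q i j k l).
Proof.
rewrite /rel_defect /comm.
by do ![apply: linearB_fun | apply: linear_mulr_fun | apply: linear_mull_fun
       | exact: F_linear | exact: linear_mulX].
Qed.

Lemma rel_defect_linearr P i j k l : linear (fun Q => rel_defect P Q i j k l).
Proof.
rewrite /rel_defect /comm.
by do ![apply: linearB_fun | apply: linear_mulr_fun | apply: linear_mull_fun
       | exact: F_linear | exact: linear_mulX].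
Qed.

Lemma polynomial_rel_on_basis (q : nat -> {poly CC}) :
  (forall k, q k \is monic) -> (forall k, size (q k) = k.+1) ->
  (forall r s i j k l, rel_defect (q r) (q s) i j k l = 0) -> polynomial_rel.
Proof.
move=> q_monic size_q defect_q P Q i j k l.
have linear0 : linear (fun _ : {poly CC} => 0 : A).
  by move=> u x y; rewrite scaler0 addr0.
apply: (linear_basis_eq q_monic size_q (rel_defect_linearl Q i j k l) linear0) => r.
exact: (linear_basis_eq q_monic size_q (rel_defect_linearr (q r) i j k l) linear0).
Qed.

Lemma yangian_relE (g : gens n A) :
  (forall m i j, F i j 'X^m = tcoef g m i j) -> yangian_rel g <-> polynomial_rel.
Proof.
move=> Fg; split=> [rel_g | rel_F r s i j k l].
  apply: (polynomial_rel_on_basis (@monicXn _) (@size_polyXn _)) => r s i j k l.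
  by rewrite /rel_defect -!exprS !Fg rel_g subrr.
by apply/eqP; rewrite -subr_eq0 -!Fg !exprS; apply/eqP/rel_F.
Qed.

Section OrthogonalBasis.
Variables (a b : nat -> CC).
Local Notation p := (orthpoly a b).

Lemma oy_relE (g : gens n A) :
  (forall m i j, F i j (p m) = tcoef g m i j) -> oy_rel a b g <-> polynomial_rel.
Proof.
move=> Fg.
have F_shift r i j : F i j ('X * p r) = oy_shift a b g r i j.
  have [FZ FD] := GRing.semilinear_linear (F_linear i j).
  rewrite mulX_orthpoly !FD !FZ !Fg /oy_shift; congr (_ + _ *: _).
  case: r => [|r] /=; last by rewrite ppairS_fst Fg.
  by rewrite -[0 in LHS](subrr 0) (zmod_morphism_linear (F_linear i j)) subrr.
split=> [rel_g | rel_F r s i j k l].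
  apply: (polynomial_rel_on_basis (orthpoly_monic a b) (size_orthpoly a b)) => r s i j k l.
  by rewrite /rel_defect !F_shift !Fg rel_g subrr.
by apply/eqP; rewrite -subr_eq0 -!Fg -!F_shift; apply/eqP/rel_F.
Qed.
End OrthogonalBasis.
End Transfer.

Definition gens_of (n : nat) (A : algType CC) (F : 'I_n -> 'I_n -> {poly CC} -> A)
    (q : nat -> {poly CC}) : gens n A :=
  fun r i j => F i j (q r.+1).

Lemma tcoef_gens_of n (A : algType CC) (F : 'I_n -> 'I_n -> {poly CC} -> A) q :
  (forall i j, F i j (q 0%N) = (i == j)%:R) ->
  forall m i j, tcoef (gens_of F q) m i j = F i j (q m).
Proof. by move=> Fq0 [|m] i j /=. Qed.

Lemma tcoef_lrmorphism n (A B : algType CC) (f : {lrmorphism A -> B})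
    (g : gens n A) (h : gens n B) :
  (forall r i j, f (g r i j) = h r i j) -> forall m i j, f (tcoef g m i j) = tcoef h m i j.
Proof. by move=> fg [|m] i j /=; [exact: rmorph_nat | exact: fg]. Qed.

Section Isomorphism.
Variables (n : nat) (a b : nat -> CC).
Variables (Y : algType CC) (t : gens n Y) (OY : algType CC) (tt : gens n OY).
Local Notation p := (orthpoly a b).

Definition yangian_ev i j (P : {poly CC}) : Y := const_term P (fun m => tcoef t m i j).

Definition oy_ev i j (P : {poly CC}) : OY := basis_ext p (fun m => tcoef tt m i j) P.

Lemma yangian_ev_linear i j : linear (yangian_ev i j).
Proof. exact: const_term_linear. Qed.

Lemma yangian_evXn m i j : yangian_ev i j 'X^m = tcoef t m i j.
Proof. exact: const_termXn. Qed.

Lemma oy_ev_linear i j : linear (oy_ev i j).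
Proof. exact: basis_ext_linear. Qed.

Lemma oy_ev_orthpoly m i j : oy_ev i j (p m) = tcoef tt m i j.
Proof. exact: (basis_ext_basis (orthpoly_monic a b) (size_orthpoly a b)). Qed.

Definition yangian_gens : gens n Y := gens_of yangian_ev p.

Definition oy_gens : gens n OY := gens_of oy_ev (fun m => 'X^m).

Lemma yangian_ev_orthpoly m i j : yangian_ev i j (p m) = tcoef yangian_gens m i j.
Proof.
by rewrite tcoef_gens_of // => i' j'; rewrite orthpoly0 -(expr0 'X) yangian_evXn.
Qed.

Lemma oy_evXn m i j : oy_ev i j 'X^m = tcoef oy_gens m i j.
Proof.
by rewrite tcoef_gens_of // => i' j'; rewrite expr0 -(orthpoly0 a b) oy_ev_orthpoly.
Qed.

Lemma yangian_gens_rel : yangian_rel t -> oy_rel a b yangian_gens.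
Proof.
move=> rel_t; apply/(oy_relE yangian_ev_linear yangian_ev_orthpoly).
exact/(yangian_relE yangian_ev_linear yangian_evXn).
Qed.

Lemma oy_gens_rel : oy_rel a b tt -> yangian_rel oy_gens.
Proof.
move=> rel_tt; apply/(yangian_relE oy_ev_linear oy_evXn).
exact/(oy_relE oy_ev_linear oy_ev_orthpoly).
Qed.

Lemma lrmorphism_yangian_ev (f : {lrmorphism Y -> OY}) :
  (forall r i j, f (t r i j) = oy_gens r i j) ->
  forall i j P, f (yangian_ev i j P) = oy_ev i j P.
Proof.
move=> ft i j; apply: (linear_basis_eq (@monicXn _) (@size_polyXn _)) => [u P Q /=||m].
- by rewrite yangian_ev_linear linearP.
- exact: oy_ev_linear.
- by rewrite yangian_evXn (tcoef_lrmorphism ft) oy_evXn.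
Qed.

Lemma lrmorphism_oy_ev (f : {lrmorphism OY -> Y}) :
  (forall r i j, f (tt r i j) = yangian_gens r i j) ->
  forall i j P, f (oy_ev i j P) = yangian_ev i j P.
Proof.
move=> ftt i j.
apply: (linear_basis_eq (orthpoly_monic a b) (size_orthpoly a b)) => [u P Q /=||m].
- by rewrite oy_ev_linear linearP.
- exact: yangian_ev_linear.
- by rewrite oy_ev_orthpoly (tcoef_lrmorphism ftt) yangian_ev_orthpoly.
Qed.
End Isomorphism.

Unset Implicit Arguments.

Theorem mainTheorem1 (n : nat) (a b : nat -> CC)
  (Y : algType CC) (t : gens n Y) (OY : algType CC) (tt : gens n OY) :
  (1 <= n)%N ->
  b 0%N = 0 ->
  (forall m : nat, (1 <= m)%N -> b m != 0) ->
  presented_by (@yangian_rel n) t ->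
  presented_by (@oy_rel n a b) tt ->
  exists W : {lrmorphism OY -> Y},
    bijective W /\
    (* W(t~^{(r)}_{ij}) = t^{(r)}_{ij} + sum_{l=0}^{r-1} p^r_l t^{(l)}_{ij}, r >= 1 *)
    (forall (r : nat) (i j : 'I_n),
        W (tt r i j) = t r i j
          + \sum_(l < r.+1) (orthpoly a b r.+1)`_l *: tcoef t l i j) /\
    (* generating series: coefficient of u^{-l} of W(T~_{ij}(u)) *)
    (forall (l : nat) (i j : 'I_n),
        W (tcoef tt l i j) = const_term (orthpoly a b l) (fun m => tcoef t m i j)
        /\ const_term (orthpoly a b l) (fun m => tcoef t m i j)
           = \sum_(m < l.+1) (orthpoly a b l)`_m *: tcoef t m i j).
Proof.
move=> _ _ _ [rel_t univ_t] [rel_tt univ_tt].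
have [[W Wtt] _] := univ_tt Y _ (yangian_gens_rel a b rel_t).
have [[V Vt] _] := univ_t OY _ (oy_gens_rel rel_tt).
have VW := lrmorphism_yangian_ev Vt; have WV := lrmorphism_oy_ev Wtt.
have const_term_orthpoly l (c : nat -> Y) :
    const_term (orthpoly a b l) c = \sum_(m < l.+1) (orthpoly a b l)`_m *: c m.
  by apply: const_termE; rewrite size_orthpoly.
exists W; split; [exists V | split].
- move=> x; apply: ((univ_tt OY tt rel_tt).2 (V \o W) idfun) => // r i j /=.
  by rewrite Wtt VW oy_ev_orthpoly.
- move=> y; apply: ((univ_t Y t rel_t).2 (W \o V) idfun) => // r i j /=.
  by rewrite Vt WV yangian_evXn.
- move=> r i j; rewrite Wtt /yangian_gens /gens_of /yangian_ev.
  rewrite const_term_orthpoly big_ord_recr /=.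
  by rewrite (coef_basis_top (orthpoly_monic a b) (size_orthpoly a b)) scale1r addrC.
- move=> l i j; split; last exact: const_term_orthpoly.
  by rewrite (tcoef_lrmorphism Wtt) -yangian_ev_orthpoly.
Qed.
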